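(* Let $\Gamma\preceq_\exists\Gamma'$ be ordered abelian groups (in the language $\{0,+,<\}$) and $\gamma\in\Gamma$. Then: (i) if $\Delta^+$ (resp. $\Delta'^+$) is the minimal convex subgroup of $\Gamma$ (resp. $\Gamma'$) containing $\gamma$, then $\Gamma/\Delta^+$ is pure in $\Gamma'/\Delta'^+$, i.e., the quotient $(\Gamma'/\Delta'^+)/(\Gamma/\Delta^+)$ is torsion-free; (ii) if $\Gamma$ is $\aleph_1$-saturated and $\Delta$ (resp. $\Delta'$) is the maximal convex subgroup of $\Gamma$ (resp. $\Gamma'$) not containing $\gamma$, then $\Gamma/\Delta\preceq_\exists\Gamma'/\Delta'$.
   Context: $\preceq_\exists$ means existentially closed substructure. A structure is $\aleph_1$-saturated if every countable decreasing chain of non-empty definable sets (with parameters) has non-empty intersection. *)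

From Stdlib Require Import ClassicalEpsilon.
From mathcomp Require Import all_boot.

Set Implicit Arguments.
Unset Strict Implicit.
Unset Printing Implicit Defensive.

Record Lstruct := LStruct {
  car : Type;
  szero : car;
  sadd : car -> car -> car;
  slt : car -> car -> Prop }.
Arguments szero {_}.
Arguments sadd {_}.
Arguments slt {_}.

Inductive term := tvar (n : nat) | tzero | tadd (t1 t2 : term).

Inductive formula :=
  | fEq (t1 t2 : term)
  | fLt (t1 t2 : term)
  | fNot (p : formula)
  | fAnd (p q : formula)
  | fEx (i : nat) (p : formula).

Fixpoint teval (M : Lstruct) (rho : nat -> car M) (t : term) : car M :=
  match t with
  | tvar n => rho n
  | tzero => szero
  | tadd t1 t2 => sadd (teval rho t1) (teval rho t2)
  end.

Definition upd (M : Lstruct) (rho : nat -> car M) (i : nat) (a : car M) : nat -> car M :=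
  fun j => if j == i then a else rho j.

Fixpoint sat (M : Lstruct) (rho : nat -> car M) (p : formula) : Prop :=
  match p with
  | fEq t1 t2 => teval rho t1 = teval rho t2
  | fLt t1 t2 => slt (teval rho t1) (teval rho t2)
  | fNot q => ~ sat rho q
  | fAnd q r => sat rho q /\ sat rho r
  | fEx i q => exists a : car M, sat (upd rho i a) q
  end.

Fixpoint qf (p : formula) : bool :=
  match p with
  | fEq _ _ | fLt _ _ => true
  | fNot q => qf q
  | fAnd q r => qf q && qf r
  | fEx _ _ => false
  end.

Definition OAG (M : Lstruct) : Prop :=
  (forall x y z : car M, sadd x (sadd y z) = sadd (sadd x y) z) /\
  (forall x y : car M, sadd x y = sadd y x) /\
  (forall x : car M, sadd szero x = x) /\
  (forall x : car M, exists y, sadd x y = szero) /\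
  (forall x : car M, ~ slt x x) /\
  (forall x y z : car M, slt x y -> slt y z -> slt x z) /\
  (forall x y : car M, slt x y \/ x = y \/ slt y x) /\
  (forall x y z : car M, slt x y -> slt (sadd x z) (sadd y z)).

Fixpoint smul (M : Lstruct) (n : nat) (x : car M) : car M :=
  match n with
  | 0 => szero
  | S k => sadd x (smul k x)
  end.

Definition embedding (M N : Lstruct) (f : car M -> car N) : Prop :=
  injective f /\ f szero = szero /\
  (forall x y, f (sadd x y) = sadd (f x) (f y)) /\
  (forall x y, slt x y <-> slt (f x) (f y)).

(* Existential formulas are represented as  ∃ x_0 ... x_{k-1}, phi  with phi
   quantifier-free; the remaining variables (index >= k) carry parameters. *)
Definition ec_embedding (M N : Lstruct) (f : car M -> car N) : Prop :=
  embedding f /\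
  forall (phi : formula) (k : nat) (rho : nat -> car M),
    qf phi ->
    (exists sigma : nat -> car N,
        (forall i, k <= i -> sigma i = f (rho i)) /\ sat sigma phi) ->
    exists tau : nat -> car M,
        (forall i, k <= i -> tau i = rho i) /\ sat tau phi.

Definition convex_subgroup (M : Lstruct) (D : car M -> Prop) : Prop :=
  D szero /\
  (forall x y, D x -> D y -> D (sadd x y)) /\
  (forall x y, D x -> sadd x y = szero -> D y) /\
  (forall a x b, D a -> D b -> slt a x -> slt x b -> D x).

Definition min_convex_containing (M : Lstruct) (g : car M) (D : car M -> Prop) : Prop :=
  convex_subgroup D /\ D g /\
  forall E : car M -> Prop, convex_subgroup E -> E g ->
    (forall x, E x -> D x) -> forall x, D x -> E x.

Definition max_convex_not_containing (M : Lstruct) (g : car M) (D : car M -> Prop) : Prop :=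
  convex_subgroup D /\ ~ D g /\
  forall E : car M -> Prop, convex_subgroup E -> ~ E g ->
    (forall x, D x -> E x) -> forall x, E x -> D x.

Definition coset (M : Lstruct) (D : car M -> Prop) (g : car M) : car M -> Prop :=
  fun x => exists d, D d /\ x = sadd g d.

Definition qcar (M : Lstruct) (D : car M -> Prop) : Type :=
  {C : car M -> Prop | exists g, C = coset D g}.

Definition rep (M : Lstruct) (D : car M -> Prop) (C : qcar D) : car M :=
  proj1_sig (constructive_indefinite_description _ (proj2_sig C)).

Definition cls (M : Lstruct) (D : car M -> Prop) (g : car M) : qcar D :=
  exist _ (coset D g) (ex_intro _ g erefl).

(* a + D < b + D  iff  a < b and a + D <> b + D  (well defined for convex D) *)
Definition quot (M : Lstruct) (D : car M -> Prop) : Lstruct :=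
  @LStruct (qcar D) (cls D szero)
    (fun C1 C2 => cls D (sadd (rep C1) (rep C2)))
    (fun C1 C2 => slt (rep C1) (rep C2) /\ C1 <> C2).

Definition extend (M : Lstruct) (n : nat) (a : 'I_n -> car M) (rho : nat -> car M) :
  nat -> car M :=
  fun i => if @insub _ (fun i => i < n) 'I_n i is Some j then a j else rho i.

Definition definable (M : Lstruct) (n : nat) (X : ('I_n -> car M) -> Prop) : Prop :=
  exists (phi : formula) (rho : nat -> car M),
    forall a, X a <-> sat (extend a rho) phi.

Definition aleph1_saturated (M : Lstruct) : Prop :=
  forall (n : nat) (X : nat -> ('I_n -> car M) -> Prop),
    (forall k, definable (X k)) ->
    (forall k a, X k.+1 a -> X k a) ->
    (forall k, exists a, X k a) ->
    exists a, forall k, X k a.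

(* Write g = |gamma|.  The minimal convex subgroup containing gamma consists of the elements
   bounded by a multiple of g, and the maximal one not containing gamma of the elements x with
   n|x| < g for all n; the same holds in G' with f g, so f induces an order embedding h between
   the quotients.

   (i) If n x' = f y modulo the bounded elements of G', then |f y - n x'| <= N (f g) for some N.
   This is an existential statement about y and g, so it has a witness z in G, and then
   n (x' - f z) is bounded; as the bounded elements form a pure subgroup, x' = f z in the
   quotient.

   (ii) In the quotient by the infinitesimals, x <= y iff n x < n y + g for every n.  So a
   quantifier-free formula holding in the quotient of G' at lifts b is decided by which of
   these countably many inequalities hold between the terms of the formula at b; for each pair
   of terms where they fail, fix one failing n.  Every finite part of this list is existential,
   true in G' at b, hence realized in G; by aleph_1-saturation the whole list is realized in G,
   and the formula then holds in the quotient of G. *)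

From mathcomp Require Import all_boot.
From Stdlib Require Import ClassicalEpsilon ProofIrrelevance.
From Stdlib Require Import FunctionalExtensionality PropExtensionality.

Set Implicit Arguments.
Unset Strict Implicit.
Unset Printing Implicit Defensive.

Lemma predext (T : Type) (P Q : T -> Prop) : (forall x, P x <-> Q x) -> P = Q.
Proof.
by move=> PQ; apply: functional_extensionality => x; apply: propositional_extensionality.
Qed.

(** * Ordered abelian groups *)

Notation "x |+| y" := (sadd x y) (at level 50, left associativity).
Notation "x <<< y" := (slt x y) (at level 70).

Definition sle (M : Lstruct) (x y : car M) : Prop := ~ y <<< x.
Notation "x <<= y" := (sle x y) (at level 70).

Definition opp (M : Lstruct) (x : car M) : car M :=
  epsilon (inhabits x) (fun y => x |+| y = szero).
Notation "x |-| y" := (x |+| opp y) (at level 50, left associativity).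

Definition absg (M : Lstruct) (x : car M) : car M :=
  if excluded_middle_informative (x <<< szero) then opp x else x.

Section OrderedGroup.
Variable M : Lstruct.
Hypothesis HM : OAG M.
Implicit Types x y z w : car M.

Lemma addrA x y z : x |+| (y |+| z) = x |+| y |+| z.
Proof. by case: HM => A _; apply: A. Qed.
Lemma addrC x y : x |+| y = y |+| x.
Proof. by case: HM => _ [C _]; apply: C. Qed.
Lemma add0r x : szero |+| x = x.
Proof. by case: HM => _ [_ [Z _]]; apply: Z. Qed.
Lemma ltxx x : ~ x <<< x.
Proof. by case: HM => _ [_ [_ [_ [I _]]]]; apply: I. Qed.
Lemma lt_trans x y z : x <<< y -> y <<< z -> x <<< z.
Proof. by case: HM => _ [_ [_ [_ [_ [T _]]]]]; apply: T. Qed.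
Lemma lt_total x y : x <<< y \/ x = y \/ y <<< x.
Proof. by case: HM => _ [_ [_ [_ [_ [_ [T _]]]]]]; apply: T. Qed.
Lemma ltD_compat x y z : x <<< y -> x |+| z <<< y |+| z.
Proof. by case: HM => _ [_ [_ [_ [_ [_ [_ O]]]]]]; apply: O. Qed.

Lemma addr0 x : x |+| szero = x.
Proof. by rewrite addrC add0r. Qed.
Lemma addrN x : x |-| x = szero.
Proof.
apply: (epsilon_spec (inhabits x) (fun y => x |+| y = szero)).
by case: HM => _ [_ [_ [I _]]]; apply: I.
Qed.
Lemma addNr x : opp x |+| x = szero.
Proof. by rewrite addrC addrN. Qed.
Lemma addrCA x y z : x |+| (y |+| z) = y |+| (x |+| z).
Proof. by rewrite addrA (addrC x y) -addrA. Qed.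
Lemma addrAC x y z : x |+| y |+| z = x |+| z |+| y.
Proof. by rewrite -addrA (addrC y z) addrA. Qed.
Lemma addrACA x y z w : x |+| y |+| (z |+| w) = x |+| z |+| (y |+| w).
Proof. by rewrite -!addrA (addrCA y). Qed.
Lemma addrK x y : x |+| y |-| y = x.
Proof. by rewrite -addrA addrN addr0. Qed.
Lemma addrNK x y : x |-| y |+| y = x.
Proof. by rewrite -addrA addNr addr0. Qed.
Lemma addIr y x z : x |+| y = z |+| y -> x = z.
Proof. by move=> E; rewrite -(addrK x y) E addrK. Qed.
Lemma opp_unique x y : x |+| y = szero -> y = opp x.
Proof. by move=> E; apply: (@addIr x); rewrite addNr addrC. Qed.
Lemma opprK x : opp (opp x) = x.
Proof. by symmetry; apply: opp_unique; rewrite addNr. Qed.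
Lemma oppr0 : opp szero = szero :> car M.
Proof. by symmetry; apply: opp_unique; rewrite addr0. Qed.
Lemma opprD x y : opp (x |+| y) = opp x |+| opp y.
Proof. by symmetry; apply: opp_unique; rewrite addrACA !addrN addr0. Qed.
Lemma opprB x y : opp (x |-| y) = y |-| x.
Proof. by rewrite opprD opprK addrC. Qed.

Lemma subrBB x y z : x |-| y |-| (x |-| z) = z |-| y.
Proof. by rewrite opprB addrC addrA addrNK. Qed.

Lemma ltrD2r z x y : x |+| z <<< y |+| z <-> x <<< y.
Proof.
split; last exact: ltD_compat.
by move=> /(ltD_compat (opp z)); rewrite !addrK.
Qed.
Lemma ltrD2l z x y : z |+| x <<< z |+| y <-> x <<< y.
Proof. by rewrite (addrC z x) (addrC z y) ltrD2r. Qed.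
Lemma lerD2r z x y : x |+| z <<= y |+| z <-> x <<= y.
Proof. by rewrite /sle ltrD2r. Qed.
Lemma lerD2l z x y : z |+| x <<= z |+| y <-> x <<= y.
Proof. by rewrite /sle ltrD2l. Qed.

Lemma lt_asym x y : x <<< y -> ~ y <<< x.
Proof. by move=> H1 H2; apply: (ltxx (lt_trans H1 H2)). Qed.
Lemma le_eqVlt x y : x <<= y <-> x = y \/ x <<< y.
Proof.
split=> [H|[->|H]]; [|exact: ltxx|exact: lt_asym].
by case: (lt_total x y) => [|[|/H]]; auto.
Qed.
Lemma lexx x : x <<= x.
Proof. exact: ltxx. Qed.
Lemma ltW x y : x <<< y -> x <<= y.
Proof. exact: lt_asym. Qed.
Lemma ltNge x y : x <<< y <-> ~ y <<= x.
Proof.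
split=> [H /(_ H)//|H].
by case: (lt_total x y) => [//|[E|/ltW//]]; case: H; rewrite E; apply: lexx.
Qed.
Lemma lt_le_trans x y z : x <<< y -> y <<= z -> x <<< z.
Proof. by move=> H /le_eqVlt [<-//|]; apply: lt_trans. Qed.
Lemma le_lt_trans x y z : x <<= y -> y <<< z -> x <<< z.
Proof. by move=> /le_eqVlt [->//|]; apply: lt_trans. Qed.
Lemma le_trans x y z : x <<= y -> y <<= z -> x <<= z.
Proof. by move=> /le_eqVlt [->//|H] /(lt_le_trans H) /ltW. Qed.

Lemma lerD x y z w : x <<= y -> z <<= w -> x |+| z <<= y |+| w.
Proof.
move=> H1 H2; apply: (@le_trans _ (y |+| z)); first by rewrite lerD2r.
by rewrite lerD2l.
Qed.
Lemma ltr_leD x y z w : x <<< y -> z <<= w -> x |+| z <<< y |+| w.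
Proof.
move=> H1 H2; apply: (@lt_le_trans _ (y |+| z)); first by rewrite ltrD2r.
by rewrite lerD2l.
Qed.
Lemma ltrD x y z w : x <<< y -> z <<< w -> x |+| z <<< y |+| w.
Proof. by move=> H1 /ltW; apply: ltr_leD. Qed.
Lemma ltr_addl x y : szero <<< y -> x <<< x |+| y.
Proof. by move=> H; rewrite -{1}(addr0 x) ltrD2l. Qed.

Lemma subr_gt0 x y : szero <<< y |-| x <-> x <<< y.
Proof. by rewrite -(ltrD2r x) add0r addrNK. Qed.
Lemma subr_ge0 x y : szero <<= y |-| x <-> x <<= y.
Proof. by rewrite /sle -(ltrD2r x) add0r addrNK. Qed.
Lemma ltrBlDl x y z : x |-| y <<< z <-> x <<< y |+| z.
Proof. by rewrite -(ltrD2r y) addrNK addrC. Qed.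
Lemma lerBlDl x y z : x |-| y <<= z <-> x <<= y |+| z.
Proof. by rewrite /sle -(ltrD2r y) addrNK addrC. Qed.
Lemma ltrBD x y z w : x |-| y <<< z |-| w <-> x |+| w <<< z |+| y.
Proof. by rewrite -(ltrD2r (y |+| w)) addrA addrNK addrACA addNr addr0. Qed.
Lemma ltrN2 x y : opp x <<< opp y <-> y <<< x.
Proof. by rewrite -(ltrD2r (x |+| y)) addrA addNr add0r addrCA addNr addr0. Qed.
Lemma oppr_gt0 x : szero <<< opp x <-> x <<< szero.
Proof. by rewrite -{1}oppr0 ltrN2. Qed.
Lemma smul_addn m n x : smul (m + n) x = smul m x |+| smul n x.
Proof. by elim: m => [|m IH] /=; rewrite ?add0r // IH addrA. Qed.
Lemma smul0 n : smul n szero = szero :> car M.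
Proof. by elim: n => [|n IH] //=; rewrite IH add0r. Qed.
Lemma smulD n x y : smul n (x |+| y) = smul n x |+| smul n y.
Proof. by elim: n => [|n IH] /=; rewrite ?add0r // IH addrACA. Qed.
Lemma smulN n x : smul n (opp x) = opp (smul n x).
Proof. by apply: opp_unique; rewrite -smulD addrN smul0. Qed.
Lemma smulB n x y : smul n (x |-| y) = smul n x |-| smul n y.
Proof. by rewrite smulD smulN. Qed.
Lemma smul_le x y : x <<= y -> forall n, smul n x <<= smul n y.
Proof. by move=> H; elim=> [|n IH] /=; [apply: lexx|apply: lerD]. Qed.
Lemma smul_ge0 x : szero <<= x -> forall n, szero <<= smul n x.
Proof. by move=> /smul_le H n; rewrite -(smul0 n); apply: H. Qed.
Lemma smul_le0 x : x <<= szero -> forall n, smul n x <<= szero.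
Proof. by move=> /smul_le H n; rewrite -(smul0 n); apply: H. Qed.
Lemma smul_monon m n x : szero <<= x -> m <= n -> smul m x <<= smul n x.
Proof.
move=> x_ge0 /subnKC <-; rewrite smul_addn -{1}(addr0 (smul m x)) lerD2l.
exact: smul_ge0.
Qed.

Lemma lt_double x y : x |+| x <<< y |+| y -> x <<< y.
Proof. by move=> H; apply/ltNge => yx; apply: (lerD yx yx). Qed.

Lemma absgP x : x <<< szero /\ absg x = opp x \/ szero <<= x /\ absg x = x.
Proof. by rewrite /absg; case: excluded_middle_informative; auto. Qed.

Lemma absg_ge0 x : szero <<= absg x.
Proof. by case: (absgP x) => [[/oppr_gt0/ltW ? ->]|[? ->]]. Qed.

Lemma absg_gt0 x : x <> szero -> szero <<< absg x.
Proof.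
move=> x_neq0; case: (absgP x) => [[x_lt0 ->]|[x_ge0 ->]]; first exact/oppr_gt0.
by case/le_eqVlt: x_ge0 => // x0; case: x_neq0.
Qed.

Definition infinitesimal g x := forall N, smul N x <<< g /\ szero <<< smul N x |+| g.
Definition bounded_by g x := exists N, x <<= smul N g /\ szero <<= x |+| smul N g.
(* [x + Δ <= y + Δ] in the quotient by the group [Δ] of [g]-infinitesimals. *)
Definition le_mod_inf g x y := forall N, smul N x <<< smul N y |+| g.

Lemma bounded_by_absg x : bounded_by (absg x) x.
Proof.
exists 1; rewrite /= addr0; case: (absgP x) => [[x_lt0 ->]|[x_ge0 ->]].
  by split; [apply/ltW/(lt_trans x_lt0)/oppr_gt0 | rewrite addrN; apply: lexx].
by split; [apply: lexx | rewrite -(addr0 szero); apply: lerD].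
Qed.

Lemma not_infinitesimal_absg x : ~ infinitesimal (absg x) x.
Proof.
move=> /(_ 1) []; rewrite /= addr0.
case: (absgP x) => [[_ ->] _|[_ ->] /ltxx //].
by rewrite addrN; apply: ltxx.
Qed.

Lemma infinitesimal_subE g x y :
  infinitesimal g (y |-| x) <-> le_mod_inf g y x /\ le_mod_inf g x y.
Proof.
rewrite /infinitesimal /le_mod_inf; split=> [H|[Hyx Hxy] N].
  split=> N; case: (H N); rewrite smulB.
  by rewrite ltrBlDl.
  by rewrite -addrAC subr_gt0.
by rewrite smulB ltrBlDl -addrAC subr_gt0.
Qed.

Lemma bounded_by_subE g x y :
  bounded_by g (y |-| x) <-> exists N, y <<= x |+| smul N g /\ x <<= y |+| smul N g.
Proof.
by split=> -[N [H1 H2]]; exists N; move: H1 H2; rewrite lerBlDl -addrAC subr_ge0.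
Qed.

Lemma le_mod_infW g x y : szero <<< g -> x <<= y -> le_mod_inf g x y.
Proof. by move=> g_gt0 xy N; apply: (le_lt_trans (smul_le (n := N) xy)); apply: ltr_addl. Qed.

Lemma le_mod_inf_pred g x y N : szero <<< g ->
  smul N.+1 x <<< smul N.+1 y |+| g -> smul N x <<< smul N y |+| g.
Proof.
move=> g_gt0 H; case: (lt_total x y) => [/ltW xy|[<-|yx]].
- exact: le_mod_infW.
- exact: ltr_addl.
by rewrite -(ltrD2l y) addrA; apply: lt_trans H; rewrite ltrD2r.
Qed.

Lemma bounded_by_pure g n x : szero <<= g -> 0 < n ->
  bounded_by g (smul n x) -> bounded_by g x.
Proof.
move=> g_ge0; case: n => // n _ [N [H1 H2]]; exists N.
have Ng_ge0 := smul_ge0 (n := N) g_ge0.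
case: (lt_total x szero) => [/ltW x_le0|[->|/ltW x_ge0]].
- split; first exact: le_trans x_le0 Ng_ge0.
  apply: (le_trans H2); rewrite lerD2r.
  by rewrite /= -[X in _ <<= X](addr0 x) lerD2l; apply: smul_le0.
- by rewrite add0r; split.
- split; last by rewrite -(addr0 szero); apply: lerD.
  apply: le_trans H1.
  by rewrite /= -[X in X <<= _](addr0 x) lerD2l; apply: smul_ge0.
Qed.

Lemma infinitesimal_convex g : szero <<< g -> convex_subgroup (infinitesimal g).
Proof.
move=> g_gt0; split; [|split; [|split]].
- by move=> N; rewrite smul0 add0r.
- move=> x y Hx Hy N; case: (Hx (N + N)) (Hy (N + N)); rewrite !smul_addn smulD.
  move=> Hx1 Hx2 [Hy1 Hy2]; split; apply: lt_double.
    by rewrite addrACA; apply: ltrD.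
  rewrite add0r addrACA; have := ltrD Hx2 Hy2.
  by rewrite add0r addrACA (addrACA (smul N x)).
- move=> x y Hx /opp_unique -> N; case: (Hx N) => H1 H2; rewrite smulN; split.
    by rewrite -(ltrD2r (smul N x)) addNr addrC.
  by rewrite addrC subr_gt0.
- move=> a x b Ha Hb /ltW ax /ltW xb N; case: (Ha N) (Hb N) => _ Ha2 [Hb1 _]; split.
    exact: le_lt_trans (smul_le (n := N) xb) Hb1.
  by apply: (lt_le_trans Ha2); rewrite lerD2r; apply: smul_le.
Qed.

Lemma bounded_by_convex g : szero <<= g -> convex_subgroup (bounded_by g).
Proof.
move=> g_ge0; split; [|split; [|split]].
- by exists 0; rewrite /= addr0; split; apply: lexx.
- move=> x y [N [Hx1 Hx2]] [K [Hy1 Hy2]]; exists (N + K); rewrite smul_addn.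
  by split; [|rewrite addrACA -(addr0 szero)]; apply: lerD.
- move=> x y [N [H1 H2]] /opp_unique ->; exists N; split.
    by rewrite -(lerD2r x) addNr addrC.
  by rewrite addrC subr_ge0.
- move=> a x b [N [_ Ha]] [K [Hb _]] /ltW ax /ltW xb; exists (N + K); split.
    by apply: (le_trans xb); apply: (le_trans Hb); apply: smul_monon => //; apply: leq_addl.
  apply: (le_trans Ha); apply: lerD => //.
  by apply: smul_monon => //; apply: leq_addr.
Qed.

Section ConvexSubgroup.
Variable D : car M -> Prop.
Hypothesis HD : convex_subgroup D.

Lemma convex0 : D szero.
Proof. by case: HD. Qed.
Lemma convexD x y : D x -> D y -> D (x |+| y).
Proof. by case: HD => _ [H _]; apply: H. Qed.
Lemma convexN x : D x -> D (opp x).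
Proof. by case: HD => _ [_ [H _]] Dx; apply: (H x) => //; apply: addrN. Qed.
Lemma convexB x y : D x -> D y -> D (x |-| y).
Proof. by move=> Dx /convexN; apply: convexD. Qed.
Lemma convex_smul n x : D x -> D (smul n x).
Proof. by move=> Dx; elim: n => [|n IH] /=; [apply: convex0|apply: convexD]. Qed.
Lemma convex_le a x b : D a -> D b -> a <<= x -> x <<= b -> D x.
Proof.
move=> Da Db /le_eqVlt [<-//|ax] /le_eqVlt [->//|xb].
by case: HD => _ [_ [_ H]]; apply: H Da Db ax xb.
Qed.
Lemma convex_absg x : D (absg x) <-> D x.
Proof.
case: (absgP x) => [[_ ->]|[_ ->]] //; split=> [|/convexN //].
by move=> /convexN; rewrite opprK.
Qed.
Lemma convex_lt_nonmember d x : D d -> ~ D x -> szero <<= x -> d <<< x.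
Proof. by move=> Dd Dx x_ge0; apply/ltNge => xd; apply/Dx/(convex_le convex0 Dd). Qed.

End ConvexSubgroup.

Lemma min_convex_containingE gamma D :
  min_convex_containing gamma D -> D = bounded_by (absg gamma).
Proof.
case=> HD [Dgamma Dmin]; set g := absg gamma.
have Dg : D g by rewrite convex_absg.
have bounded_sub x : bounded_by g x -> D x.
  move=> [N [H1 H2]]; have DNg := convex_smul HD N Dg.
  apply: (convex_le HD (convexN HD DNg) DNg) => //.
  by rewrite -(lerD2r (smul N g)) addNr.
have := Dmin _ (bounded_by_convex (absg_ge0 (x := gamma))) (@bounded_by_absg gamma) bounded_sub.
by move=> sub; apply: predext => x; split; [apply: sub|apply: bounded_sub].
Qed.

Lemma max_convex_not_containing_neq0 (gamma : car M) D :
  max_convex_not_containing gamma D -> gamma <> szero.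
Proof. by case=> HD [Dgamma _] gamma0; apply: Dgamma; rewrite gamma0; apply: (convex0 HD). Qed.

Lemma max_convex_not_containingE gamma D :
  max_convex_not_containing gamma D -> D = infinitesimal (absg gamma).
Proof.
move=> Dmaxc; have g_gt0 := absg_gt0 (max_convex_not_containing_neq0 Dmaxc).
case: Dmaxc => HD [Dgamma Dmax]; set g := absg gamma.
have Dg : ~ D g by rewrite convex_absg.
have sub x : D x -> infinitesimal g x.
  move=> Dx N; have DNx := convex_smul HD N Dx; split.
    by apply: (convex_lt_nonmember HD DNx Dg (ltW g_gt0)).
  have := convex_lt_nonmember HD (convexN HD DNx) Dg (ltW g_gt0).
  by rewrite -(ltrD2r (smul N x)) addNr addrC.
have := Dmax _ (infinitesimal_convex g_gt0) (@not_infinitesimal_absg gamma) sub.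
by move=> sup; apply: predext => x; split; [apply: sub|apply: sup].
Qed.

(** * Quotients by convex subgroups *)

Section Quotient.
Variable D : car M -> Prop.
Hypothesis HD : convex_subgroup D.

Lemma cls_eqE u v : cls D u = cls D v <-> D (v |-| u).
Proof.
split=> [E|Dvu].
  have : proj1_sig (cls D v) v by exists szero; rewrite addr0; split=> //; apply: (convex0 HD).
  by rewrite -E => -[d [Dd ->]]; rewrite addrAC addrN add0r.
have Duv : D (u |-| v) by rewrite -opprB; apply: (convexN HD Dvu).
apply: subset_eq_compat; apply: predext => x; split=> -[d [Dd ->]].
  by exists (u |-| v |+| d); split; [apply: (convexD HD Duv Dd)|rewrite addrA addrCA addrN addr0].
by exists (v |-| u |+| d); split; [apply: (convexD HD Dvu Dd)|rewrite addrA addrCA addrN addr0].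
Qed.

Lemma cls_rep (C : qcar D) : cls D (rep C) = C.
Proof.
case: C => P HP; rewrite /rep /=; case: constructive_indefinite_description => g /= E.
by apply: subset_eq_compat.
Qed.

Lemma cls_surj (C : qcar D) : exists a, C = cls D a.
Proof. by exists (rep C); rewrite cls_rep. Qed.

Lemma quot_add a b : @sadd (quot D) (cls D a) (cls D b) = cls D (a |+| b).
Proof.
have /cls_eqE Da := cls_rep (cls D a); have /cls_eqE Db := cls_rep (cls D b).
by apply/cls_eqE; rewrite opprD addrACA; apply: (convexD HD Da Db).
Qed.

Lemma quot_smul n a : @smul (quot D) n (cls D a) = cls D (smul n a).
Proof. by elim: n => [|n IH] //=; rewrite IH; apply: quot_add. Qed.

Lemma quot_teval (r : nat -> car M) t :
  @teval (quot D) (fun i => cls D (r i)) t = cls D (teval r t).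
Proof. by elim: t => [n|//|t1 IH1 t2 IH2] //=; rewrite IH1 IH2; apply: quot_add. Qed.

Lemma lt_cls_compat u v u' v' : cls D u = cls D u' -> cls D v = cls D v' ->
  cls D u <> cls D v -> u <<< v -> u' <<< v'.
Proof.
move=> /cls_eqE Du /cls_eqE Dv neq uv.
have vu_gt0 : szero <<< v |-| u by rewrite subr_gt0.
have Dvu : ~ D (v |-| u) by move=> /cls_eqE.
have := convex_lt_nonmember HD (convexB HD Du Dv) Dvu (ltW vu_gt0).
by rewrite ltrBD addrNK addrCA addrN addr0.
Qed.

Lemma quot_lt a b : @slt (quot D) (cls D a) (cls D b) <-> a <<< b /\ cls D a <> cls D b.
Proof.
have Ea := cls_rep (cls D a); have Eb := cls_rep (cls D b).
rewrite /=; split=> -[lt neq]; split=> //.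
  by apply: (lt_cls_compat Ea Eb) lt; rewrite Ea Eb.
exact: (lt_cls_compat (esym Ea) (esym Eb)).
Qed.

End Quotient.

Section InfinitesimalQuotient.
Variable g : car M.
Hypothesis g_gt0 : szero <<< g.

Lemma cls_eq_infinitesimal u v :
  cls (infinitesimal g) u = cls (infinitesimal g) v <-> le_mod_inf g u v /\ le_mod_inf g v u.
Proof. by rewrite (cls_eqE (infinitesimal_convex g_gt0)) infinitesimal_subE and_comm. Qed.

Lemma quot_lt_infinitesimal u v :
  @slt (quot (infinitesimal g)) (cls _ u) (cls _ v) <-> ~ le_mod_inf g v u.
Proof.
rewrite (quot_lt (infinitesimal_convex g_gt0)) cls_eq_infinitesimal; split.
  by move=> [uv neq] vu; apply: neq; split=> //; apply: le_mod_infW (ltW uv).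
move=> vu; split; last by case.
by apply/ltNge => /(le_mod_infW g_gt0).
Qed.

End InfinitesimalQuotient.

End OrderedGroup.

Definition quot_map (M N : Lstruct) (f : car M -> car N)
    (D : car M -> Prop) (D' : car N -> Prop) (C : car (quot D)) : car (quot D') :=
  cls D' (f (rep C)).
Arguments quot_map [M N] f D D' C.

Section Embedding.
Variables (G G' : Lstruct) (f : car G -> car G').
Hypotheses (HG : OAG G) (HG' : OAG G') (Hf : embedding f).
Implicit Types x y g : car G.

Lemma emb0 : f szero = szero.
Proof. by case: Hf => _ []. Qed.
Lemma embD x y : f (x |+| y) = f x |+| f y.
Proof. by case: Hf => _ [_ []]. Qed.
Lemma emb_lt x y : f x <<< f y <-> x <<< y.
Proof. by case: Hf => _ [_ [_ H]]; rewrite H. Qed.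
Lemma emb_le x y : f x <<= f y <-> x <<= y.
Proof. by rewrite /sle emb_lt. Qed.
Lemma embN x : f (opp x) = opp (f x).
Proof. by apply: (opp_unique HG'); rewrite -embD (addrN HG) emb0. Qed.
Lemma emb_smul n x : f (smul n x) = smul n (f x).
Proof. by elim: n => [|n IH] /=; rewrite ?emb0 // embD IH. Qed.
Lemma emb_absg x : f (absg x) = absg (f x).
Proof.
have x_lt0 : f x <<< szero <-> x <<< szero by rewrite -emb0 emb_lt.
case: (absgP x) (absgP (f x)) => [[x_neg ->]|[x_nneg ->]] [[fx_neg ->]|[fx_nneg ->]] //.
- exact: embN.
- by case: (fx_nneg (proj2 x_lt0 x_neg)).
- by case: (x_nneg (proj1 x_lt0 fx_neg)).
Qed.

Lemma emb_infinitesimal g x : infinitesimal (f g) (f x) <-> infinitesimal g x.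
Proof. by split=> H N; case: (H N); rewrite -emb_smul -?embD -?emb0 !emb_lt ?emb0. Qed.

Lemma emb_bounded_by g x : bounded_by (f g) (f x) <-> bounded_by g x.
Proof.
by split=> -[N [H1 H2]]; exists N; move: H1 H2; rewrite -emb_smul -?embD -?emb0 !emb_le ?emb0.
Qed.

Section QuotMap.
Variables (D : car G -> Prop) (D' : car G' -> Prop).
Hypotheses (HD : convex_subgroup D) (HD' : convex_subgroup D').
Hypothesis HDf : forall x, D' (f x) <-> D x.

Lemma quot_map_cls x : quot_map f D D' (cls D x) = cls D' (f x).
Proof.
have /(cls_eqE HG HD) Dx := cls_rep (cls D x).
by apply/(cls_eqE HG' HD'); rewrite -embN -embD HDf.
Qed.

Lemma quot_map_inj : injective (quot_map f D D').
Proof.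
move=> C1 C2; have [a ->] := cls_surj C1; have [b ->] := cls_surj C2.
by rewrite !quot_map_cls => /(cls_eqE HG' HD'); rewrite -embN -embD HDf => /(cls_eqE HG HD).
Qed.

Lemma quot_map_embedding : embedding (quot_map f D D').
Proof.
split; first exact: quot_map_inj.
split; first by rewrite [LHS]quot_map_cls emb0.
split=> C1 C2; have [a ->] := cls_surj C1; have [b ->] := cls_surj C2.
  by rewrite (quot_add HG HD) !quot_map_cls embD (quot_add HG' HD').
rewrite (quot_lt HG HD) !quot_map_cls (quot_lt HG' HD') emb_lt.
split=> -[ab neq]; split=> // E; apply: neq.
  by apply: quot_map_inj; rewrite !quot_map_cls.
by rewrite -!quot_map_cls E.
Qed.

End QuotMap.
End Embedding.

Fixpoint tmul (n : nat) (t : term) : term :=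
  if n is k.+1 then tadd t (tmul k t) else tzero.

Fixpoint tbound (t : term) : nat :=
  match t with tvar n => n.+1 | tzero => 0 | tadd t1 t2 => maxn (tbound t1) (tbound t2) end.

Fixpoint fbound (phi : formula) : nat :=
  match phi with
  | fEq t1 t2 | fLt t1 t2 => maxn (tbound t1) (tbound t2)
  | fNot p | fEx _ p => fbound p
  | fAnd p q => maxn (fbound p) (fbound q)
  end.

Fixpoint atomwise (P : term -> term -> Prop) (phi : formula) : Prop :=
  match phi with
  | fEq t1 t2 | fLt t1 t2 => P t1 t2
  | fNot p | fEx _ p => atomwise P p
  | fAnd p q => atomwise P p /\ atomwise P q
  end.

Fixpoint atomwise_formula (A : term -> term -> formula) (phi : formula) : formula :=
  match phi with
  | fEq t1 t2 | fLt t1 t2 => A t1 t2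
  | fNot p | fEx _ p => atomwise_formula A p
  | fAnd p q => fAnd (atomwise_formula A p) (atomwise_formula A q)
  end.

Section Syntax.
Variable M : Lstruct.
Implicit Types (r : nat -> car M) (t : term) (phi : formula).

Lemma teval_tmul r n t : teval r (tmul n t) = smul n (teval r t).
Proof. by elim: n => [|n IH] //=; rewrite IH. Qed.

Lemma teval_upd r m x t : tbound t <= m -> teval (upd r m x) t = teval r t.
Proof.
elim: t => [i|//|t1 IH1 t2 IH2] /=; last by rewrite geq_max => /andP [/IH1 -> /IH2 ->].
by rewrite /upd => /ltn_eqF ->.
Qed.

Lemma extend_lt n (c : 'I_n -> car M) r i (ltin : i < n) : extend c r i = c (Ordinal ltin).
Proof. by rewrite /extend insubT. Qed.

Lemma extend_ge n (c : 'I_n -> car M) r i : n <= i -> extend c r i = r i.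
Proof. by move=> le_ni; rewrite /extend insubF // ltnNge le_ni. Qed.

Lemma extend_upd n (c : 'I_n -> car M) r m x :
  n <= m -> extend c (upd r m x) = upd (extend c r) m x.
Proof.
move=> le_nm; apply: functional_extensionality => i; rewrite /upd.
case: (ltnP i n) => [ltin|le_ni]; last by rewrite !extend_ge.
by rewrite !(extend_lt _ _ ltin) (ltn_eqF (leq_trans ltin le_nm)).
Qed.

Lemma atomwise_all P phi : (forall t1 t2, P t1 t2) -> atomwise P phi.
Proof. by move=> HP; elim: phi => //= *; split. Qed.

Lemma atomwise_forall (P : nat -> term -> term -> Prop) phi :
  (forall N, atomwise (P N) phi) -> atomwise (fun t1 t2 => forall N, P N t1 t2) phi.
Proof.
elim: phi => [t1 t2|t1 t2|p IH|p IHp q IHq|i p IH] //=.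
by move=> H; split; [apply: IHp|apply: IHq] => N; case: (H N).
Qed.

Lemma atomwise_impl n (P Q : term -> term -> Prop) phi : fbound phi <= n ->
  (forall t1 t2, tbound t1 <= n -> tbound t2 <= n -> P t1 t2 -> Q t1 t2) ->
  atomwise P phi -> atomwise Q phi.
Proof.
move=> + PQ; elim: phi => [t1 t2|t1 t2|p IH|p IHp q IHq|i p IH] /=; rewrite ?geq_max //.
- by case/andP=> b1 b2; apply: PQ.
- by case/andP=> b1 b2; apply: PQ.
- by case/andP=> bp bq [Hp Hq]; split; [apply: IHp|apply: IHq].
Qed.

Lemma sat_atomwise_formula r A phi :
  sat r (atomwise_formula A phi) <-> atomwise (fun t1 t2 => sat r (A t1 t2)) phi.
Proof. by elim: phi => //= p IHp q IHq; rewrite IHp IHq. Qed.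

Lemma qf_atomwise_formula A phi :
  (forall t1 t2, qf (A t1 t2)) -> qf (atomwise_formula A phi).
Proof. by move=> HA; elim: phi => //= p IHp q IHq; rewrite IHp IHq. Qed.

End Syntax.

Lemma sat_qf_transfer (M N : Lstruct) (r1 : nat -> car M) (r2 : nat -> car N) phi :
  qf phi ->
  atomwise (fun t1 t2 =>
      (teval r1 t1 = teval r1 t2 <-> teval r2 t1 = teval r2 t2) /\
      (teval r1 t1 <<< teval r1 t2 <-> teval r2 t1 <<< teval r2 t2)) phi ->
  (sat r1 phi <-> sat r2 phi).
Proof.
elim: phi => [t1 t2|t1 t2|p IH|p IHp q IHq|//] /=.
- by move=> _ [->].
- by move=> _ [_ ->].
- by move=> qf_p /(IH qf_p) ->.
- by case/andP=> qf_p qf_q [/(IHp qf_p) -> /(IHq qf_q) ->].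
Qed.

(** * Purity of the quotient by the minimal convex subgroup *)

Definition near_multiple (n N : nat) : formula :=
  fAnd (fNot (fLt (tadd (tmul n (tvar 0)) (tmul N (tvar 2))) (tvar 1)))
       (fNot (fLt (tadd (tvar 1) (tmul N (tvar 2))) (tmul n (tvar 0)))).

Lemma sat_near_multiple (M : Lstruct) (r : nat -> car M) n N :
  sat r (near_multiple n N) <->
  r 1 <<= smul n (r 0) |+| smul N (r 2) /\ smul n (r 0) <<= r 1 |+| smul N (r 2).
Proof. by rewrite /= !teval_tmul. Qed.

Section ExistentiallyClosed.
Variables (G G' : Lstruct) (f : car G -> car G').
Hypotheses (HG : OAG G) (HG' : OAG G') (Hf : ec_embedding f).

Lemma ec_near_multiple n (g y : car G) (x : car G') :
  bounded_by (f g) (f y |-| smul n x) -> exists z, bounded_by g (y |-| smul n z).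
Proof.
case: Hf => _ Hec; rewrite (bounded_by_subE HG') => -[N near_x].
pose rho i := if i == 1 then y else g.
have [|tau [tau_rho /sat_near_multiple]] := Hec (near_multiple n N) 1 rho erefl.
  by exists (fun i => if i == 0 then x else f (rho i)); split; [by case|apply/sat_near_multiple].
rewrite (tau_rho 1) // (tau_rho 2) // => near_z.
by exists (tau 0); apply/(bounded_by_subE HG); exists N.
Qed.

Lemma quot_map_bounded_by_pure g : szero <<= g ->
  forall n (x : car (quot (bounded_by (f g)))), 0 < n ->
    (exists y, smul n x = quot_map f (bounded_by g) (bounded_by (f g)) y) ->
    exists y, x = quot_map f (bounded_by g) (bounded_by (f g)) y.
Proof.
move=> g_ge0; have Hemb := proj1 Hf.
have fg_ge0 : szero <<= f g by rewrite -(emb0 Hemb) (emb_le Hemb).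
have HD := bounded_by_convex HG g_ge0; have HD' := bounded_by_convex HG' fg_ge0.
have map_cls := quot_map_cls HG HG' Hemb HD HD' (emb_bounded_by Hemb g).
move=> n x n_gt0 [y]; have [x' ->] := cls_surj x; have [y' ->] := cls_surj y.
rewrite map_cls (quot_smul HG' HD') => /(cls_eqE HG' HD') near_x.
have [z near_z] := ec_near_multiple near_x.
exists (cls _ z); rewrite map_cls; apply/(cls_eqE HG' HD').
apply: (bounded_by_pure HG' fg_ge0 n_gt0).
rewrite (smulB HG') -(subrBB HG' (f y')); apply: (convexB HG' HD' near_x).
by rewrite -(emb_smul Hemb) -(embN HG HG' Hemb) -(embD Hemb) (emb_bounded_by Hemb).
Qed.

End ExistentiallyClosed.

(** * Existential closedness of the quotient by the maximal convex subgroup *)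

(* [None] records that [le_mod_inf g x y] holds, [Some K] a multiple [K] witnessing that it
   fails. *)
Definition le_mod_inf_pattern (M : Lstruct) (g x y : car M) (o : option nat) : Prop :=
  if o is Some K then ~ smul K x <<< smul K y |+| g else le_mod_inf g x y.

Lemma le_mod_inf_pattern_exists (M : Lstruct) (g x y : car M) :
  exists o, le_mod_inf_pattern g x y o.
Proof.
case: (excluded_middle_informative (le_mod_inf g x y)) => [H|/not_all_ex_not [K HK]].
  by exists None.
by exists (Some K).
Qed.

Lemma le_mod_inf_patternE (M : Lstruct) (g x y : car M) o :
  le_mod_inf_pattern g x y o -> (le_mod_inf g x y <-> o = None).
Proof. by case: o => [K HK|//]; split=> // /(_ K). Qed.

(* Variable [m] carries the parameter [g], for which the language has no constant. *)
Definition pattern_atom (m N : nat) (o : option nat) (t1 t2 : term) : formula :=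
  let below K := fLt (tmul K t1) (tadd (tmul K t2) (tvar m)) in
  if o is Some K then fNot (below K) else below N.

Lemma sat_pattern_atom (M : Lstruct) (r : nat -> car M) m N o t1 t2 :
  sat r (pattern_atom m N o t1 t2) <->
  if o is Some K then ~ smul K (teval r t1) <<< smul K (teval r t2) |+| r m
  else smul N (teval r t1) <<< smul N (teval r t2) |+| r m.
Proof. by case: o => [K|] /=; rewrite !teval_tmul. Qed.

Lemma sat_pattern_atom_all (M : Lstruct) (r : nat -> car M) m o t1 t2 :
  (forall N, sat r (pattern_atom m N o t1 t2)) <->
  le_mod_inf_pattern (r m) (teval r t1) (teval r t2) o.
Proof.
case: o => [K|] /=; split.
- by move=> /(_ 0); rewrite !teval_tmul.
- by move=> H N; rewrite !teval_tmul.
- by move=> H N; move: (H N); rewrite !teval_tmul.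
- by move=> H N; rewrite !teval_tmul; apply: H.
Qed.

Section PatternFormula.
Variables (m : nat) (o : term -> term -> option nat) (phi : formula).

Definition pattern_formula N : formula :=
  atomwise_formula (fun t1 t2 =>
    fAnd (pattern_atom m N (o t1 t2) t1 t2) (pattern_atom m N (o t2 t1) t2 t1)) phi.

Lemma qf_pattern_formula N : qf (pattern_formula N).
Proof.
apply: qf_atomwise_formula => t1 t2 /=.
by rewrite /pattern_atom; case: (o t1 t2); case: (o t2 t1).
Qed.

Lemma sat_pattern_formula_pred (M : Lstruct) (HM : OAG M) (r : nat -> car M) N :
  szero <<< r m -> sat r (pattern_formula N.+1) -> sat r (pattern_formula N).
Proof.
move=> rm_gt0; rewrite !sat_atomwise_formula.
apply: (atomwise_impl (leqnn _)) => t1 t2 _ _ /=.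
have pred u v : sat r (pattern_atom m N.+1 (o u v) u v) -> sat r (pattern_atom m N (o u v) u v).
  by rewrite !sat_pattern_atom; case: (o u v) => // /(le_mod_inf_pred HM rm_gt0).
by case=> /pred ? /pred.
Qed.

Lemma sat_pattern_formula_all (M : Lstruct) (r : nat -> car M) :
  (forall N, sat r (pattern_formula N)) <->
  atomwise (fun t1 t2 =>
    le_mod_inf_pattern (r m) (teval r t1) (teval r t2) (o t1 t2) /\
    le_mod_inf_pattern (r m) (teval r t2) (teval r t1) (o t2 t1)) phi.
Proof.
split=> [sat_r|pat N].
  have := atomwise_forall (fun N => proj1 (sat_atomwise_formula _ _ _) (sat_r N)).
  apply: (atomwise_impl (leqnn _)) => t1 t2 _ _ sat_t.
  by split; apply/sat_pattern_atom_all => N; case: (sat_t N).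
apply/sat_atomwise_formula; move: pat; apply: (atomwise_impl (leqnn _)) => t1 t2 _ _ [p12 p21].
by split; [move/sat_pattern_atom_all: p12|move/sat_pattern_atom_all: p21]; apply.
Qed.

End PatternFormula.

Section Saturation.
Variables (G G' : Lstruct) (f : car G -> car G').
Hypotheses (HG : OAG G) (HG' : OAG G') (Hf : ec_embedding f).
Hypothesis satG : aleph1_saturated G.

Lemma ec_saturated_realize k (a : nat -> car G) (psi : nat -> formula) :
  (forall N, qf (psi N)) ->
  (forall N (c : 'I_k -> car G), sat (extend c a) (psi N.+1) -> sat (extend c a) (psi N)) ->
  (forall N, exists sigma, (forall i, k <= i -> sigma i = f (a i)) /\ sat sigma (psi N)) ->
  exists c : 'I_k -> car G, forall N, sat (extend c a) (psi N).
Proof.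
move=> qf_psi psi_pred psi_realized'; apply: satG => [N|N c|N]; first by exists (psi N), a.
  exact: psi_pred.
have [tau [tau_a sat_tau]] := proj2 Hf _ _ _ (qf_psi N) (psi_realized' N).
exists (fun i : 'I_k => tau i); congr (sat _ _): sat_tau.
apply: functional_extensionality => i; case: (ltnP i k) => [ltik|leki].
  by rewrite (extend_lt _ _ ltik).
by rewrite extend_ge // tau_a.
Qed.

Variable g : car G.
Hypothesis g_gt0 : szero <<< g.

Lemma ec_realize_le_mod_inf_pattern phi k (a : nat -> car G) (b : nat -> car G') :
  (forall i, k <= i -> b i = f (a i)) ->
  exists c : 'I_k -> car G,
    let agree u v := le_mod_inf g (teval (extend c a) u) (teval (extend c a) v) <->
                     le_mod_inf (f g) (teval b u) (teval b v) in
    atomwise (fun t1 t2 => agree t1 t2 /\ agree t2 t1) phi.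
Proof.
move=> b_a; pose m := k + fbound phi.
have le_km : k <= m by apply: leq_addr.
have phi_m : fbound phi <= m by apply: leq_addl.
pose a' := upd a m g; pose b' := upd b m (f g).
have b'_m : b' m = f g by rewrite /b' /upd eqxx.
have a'_m (c : 'I_k -> car G) : extend c a' m = g by rewrite extend_ge // /a' /upd eqxx.
have [o o_b'] : exists o : term -> term -> option nat,
    forall u v, le_mod_inf_pattern (f g) (teval b' u) (teval b' v) (o u v).
  exists (fun u v => epsilon (inhabits None) (le_mod_inf_pattern (f g) (teval b' u) (teval b' v))).
  by move=> u v; apply: epsilon_spec; apply: le_mod_inf_pattern_exists.
have [c sat_c] : exists c : 'I_k -> car G, forall N, sat (extend c a') (pattern_formula m o phi N).
  apply: ec_saturated_realize => [N|N c|N]; first exact: qf_pattern_formula.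
    by apply: (sat_pattern_formula_pred HG); rewrite a'_m.
  exists b'; split; first by move=> i le_ki; rewrite /b' /a' /upd; case: eqP => // _; apply: b_a.
  move: N; apply/sat_pattern_formula_all; apply: atomwise_all => t1 t2.
  by rewrite b'_m; split; apply: o_b'.
exists c => /=; move/sat_pattern_formula_all: sat_c; rewrite a'_m /a' extend_upd //.
set e' := upd (extend c a) m g.
have agree u v : tbound u <= m -> tbound v <= m ->
    le_mod_inf_pattern g (teval e' u) (teval e' v) (o u v) ->
    (le_mod_inf g (teval (extend c a) u) (teval (extend c a) v) <->
     le_mod_inf (f g) (teval b u) (teval b v)).
  move=> u_m v_m; rewrite !teval_upd // => /le_mod_inf_patternE ->.
  by move: (o_b' u v); rewrite /b' !teval_upd // => /le_mod_inf_patternE ->.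
by apply: (atomwise_impl phi_m) => t1 t2 t1_m t2_m [p12 p21]; split; apply: agree.
Qed.

Lemma quot_map_infinitesimal_ec :
  ec_embedding (quot_map f (infinitesimal g) (infinitesimal (f g))).
Proof.
have Hemb := proj1 Hf.
have fg_gt0 : szero <<< f g by rewrite -(emb0 Hemb) (emb_lt Hemb).
have HD := infinitesimal_convex HG g_gt0; have HD' := infinitesimal_convex HG' fg_gt0.
have HDf := emb_infinitesimal Hemb g.
split; first exact: (quot_map_embedding HG HG' Hemb HD HD' HDf).
move=> phi k rho qf_phi [sigma [sigma_rho sat_sigma]].
pose a i := rep (rho i); pose b i := if i < k then rep (sigma i) else f (a i).
have [|c agree] := @ec_realize_le_mod_inf_pattern phi k a b.
  by move=> i le_ki; rewrite /b ltnNge le_ki.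
exists (fun i => cls _ (extend c a i)); split.
  by move=> i le_ki; rewrite extend_ge // cls_rep.
have sigma_b : sigma = (fun i => cls _ (b i)).
  apply: functional_extensionality => i; rewrite /b; case: ltnP => [_|le_ki].
    by rewrite cls_rep.
  by rewrite sigma_rho // -[rho i]cls_rep (quot_map_cls HG HG' Hemb HD HD' HDf).
rewrite sigma_b in sat_sigma; apply: (proj2 (sat_qf_transfer qf_phi _) sat_sigma).
move: agree; apply: (atomwise_impl (leqnn _)) => t1 t2 _ _ [agree12 agree21].
rewrite (quot_teval HG HD) (quot_teval HG HD) (quot_teval HG' HD') (quot_teval HG' HD').
rewrite (cls_eq_infinitesimal HG g_gt0) (cls_eq_infinitesimal HG' fg_gt0).
rewrite (quot_lt_infinitesimal HG g_gt0) (quot_lt_infinitesimal HG' fg_gt0).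
by rewrite agree12 agree21.
Qed.

End Saturation.

Theorem lemma2p11 (G G' : Lstruct) (f : car G -> car G') (gamma : car G) :
  OAG G -> OAG G' -> ec_embedding f ->
  (forall (Dp : car G -> Prop) (Dp' : car G' -> Prop),
      min_convex_containing gamma Dp -> min_convex_containing (f gamma) Dp' ->
      exists h : car (quot Dp) -> car (quot Dp'),
        (forall g, h (cls Dp g) = cls Dp' (f g)) /\
        injective h /\
        (forall (n : nat) (x : car (quot Dp')), 0 < n ->
            (exists y, smul n x = h y) -> exists y, x = h y))
  /\
  (aleph1_saturated G ->
   forall (D : car G -> Prop) (D' : car G' -> Prop),
      max_convex_not_containing gamma D -> max_convex_not_containing (f gamma) D' ->
      exists h : car (quot D) -> car (quot D'),
        (forall g, h (cls D g) = cls D' (f g)) /\ ec_embedding h).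
Proof.
move=> HG HG' Hf; have Hemb := proj1 Hf; split.
  move=> Dp Dp' /(min_convex_containingE HG) -> /(min_convex_containingE HG') ->.
  rewrite -(emb_absg HG HG' Hemb); have g_ge0 : szero <<= absg gamma by apply: absg_ge0.
  have fg_ge0 : szero <<= f (absg gamma) by rewrite -(emb0 Hemb) (emb_le Hemb).
  have HD := bounded_by_convex HG g_ge0; have HD' := bounded_by_convex HG' fg_ge0.
  have HDf := emb_bounded_by Hemb (absg gamma).
  exists (quot_map f _ _); split; first exact: (quot_map_cls HG HG' Hemb HD HD' HDf).
  by split; [apply: (quot_map_inj HG HG' Hemb HD HD' HDf)|apply: quot_map_bounded_by_pure].
move=> satG D D' Dmax /(max_convex_not_containingE HG') ->.
have g_gt0 := absg_gt0 HG (max_convex_not_containing_neq0 Dmax).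
have fg_gt0 : szero <<< f (absg gamma) by rewrite -(emb0 Hemb) (emb_lt Hemb).
move: Dmax => /(max_convex_not_containingE HG) ->; rewrite -(emb_absg HG HG' Hemb).
have HD := infinitesimal_convex HG g_gt0; have HD' := infinitesimal_convex HG' fg_gt0.
exists (quot_map f _ _); split; last exact: quot_map_infinitesimal_ec.
exact: (quot_map_cls HG HG' Hemb HD HD' (emb_infinitesimal Hemb _)).
Qed.
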